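(* Let $c>1$ be a constant. There is a constant $d$ (depending only on $c$) such that for every convex $c$-fat polygon $P$ and every line $M$ cutting $P$ at two points $a$ and $b$ of its boundary, the length $s$ of the shorter of the two parts of the perimeter of $P$ between $a$ and $b$ satisfies $s\le d\cdot|ab|$.
   Context: A polygon is $c$-fat if the ratio of the radius of the smallest disc containing it to the radius of the largest disc contained in it is at most $c$. $|ab|$ denotes the Euclidean distance between $a$ and $b$. *)

From HB Require Import structures.
From mathcomp Require Import all_boot all_order all_algebra.
From mathcomp Require Import boolp classical_sets reals.
Set Implicit Arguments. Unset Strict Implicit. Unset Printing Implicit Defensive.
Import Order.TTheory GRing.Theory Num.Theory.
Local Open Scope ring_scope.
Local Open Scope classical_set_scope.

Section Plane.
Variable R : realType.
Definition pt := (R * R)%type.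

Definition dist (a b : pt) : R :=
  Num.sqrt ((a.1 - b.1) ^+ 2 + (a.2 - b.2) ^+ 2).

(* twice the signed area of triangle abc; > 0 iff a,b,c is a left turn *)
Definition orient (a b c : pt) : R :=
  (b.1 - a.1) * (c.2 - a.2) - (b.2 - a.2) * (c.1 - a.1).

(* A polygon is given by its list of vertices V = [v_0; ...; v_{n-1}];
   indices are taken cyclically modulo n. *)
Definition vtx (V : seq pt) (k : nat) : pt := nth (0, 0) V (k %% size V).

(* V lists (at least 3) vertices of a convex polygon in counterclockwise
   order: every vertex other than the endpoints of edge [v_k, v_{k+1}] lies
   strictly to the left of that edge. *)
Definition convex_polygon (V : seq pt) : Prop :=
  (3 <= size V)%N /\
  forall k m, (k < size V)%N -> (m < size V)%N ->
    m != k -> m != (k.+1 %% size V)%N ->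
    0 < orient (vtx V k) (vtx V k.+1) (vtx V m).

Definition polygon_region (V : seq pt) : set pt :=
  [set x | forall k, (k < size V)%N -> 0 <= orient (vtx V k) (vtx V k.+1) x].

Definition on_seg (p q x : pt) : Prop :=
  exists t : R, 0 <= t <= 1 /\ x = (p.1 + t * (q.1 - p.1), p.2 + t * (q.2 - p.2)).

Definition on_edge (V : seq pt) (k : nat) (x : pt) : Prop :=
  on_seg (vtx V k) (vtx V k.+1) x.

Definition polygon_boundary (V : seq pt) : set pt :=
  [set x | exists2 k, (k < size V)%N & on_edge V k x].

Definition line (p u : pt) : set pt :=
  [set x | exists t : R, x = (p.1 + t * u.1, p.2 + t * u.2)].

(* Length of the part of the perimeter going counterclockwise from the
   point a (lying on edge i) to the point b (lying on edge j), i <> j: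
   a -> v_{i+1} -> ... -> v_j -> b. *)
Definition perim_arc (V : seq pt) (i : nat) (a : pt) (j : nat) (b : pt) : R :=
  let n := size V in
  let m := ((j + n - i) %% n)%N in
  dist a (vtx V i.+1)
  + \sum_(1 <= k < m) dist (vtx V (i + k)) (vtx V (i + k).+1)
  + dist (vtx V j) b.

Definition disc (o : pt) (r : R) : set pt := [set x | dist x o <= r].

Definition outer_radius (V : seq pt) : R :=
  inf [set r : R | exists o : pt, polygon_region V `<=` disc o r].

Definition inner_radius (V : seq pt) : R :=
  sup [set r : R | 0 <= r /\ exists o : pt, disc o r `<=` polygon_region V].

Definition fat (c : R) (V : seq pt) : Prop :=
  outer_radius V / inner_radius V <= c.

End Plane.

From HB Require Import structures.
From mathcomp Require Import all_boot all_order all_algebra.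
From mathcomp Require Import boolp classical_sets reals.
From mathcomp Require Import ring lra zify.
Import Order.TTheory GRing.Theory Num.Theory.
Local Open Scope ring_scope.
Local Open Scope classical_set_scope.

(* Fatness provides a disc of radius r inside P and a disc of radius R <= 2 (c + 1) r
   containing P.  Shrinking the inner disc to radius r/2 and moving its centre z
   perpendicularly to ab, we may assume that z lies at distance >= r/2 from the line ab,
   on the side opposite to one of the two arcs from a to b.  The line of each edge pq of
   that arc is at distance >= r/2 from z, so (r/2)|pq| <= 2 area(zpq); and projecting
   centrally from z onto the parallel to ab at distance 1 from z,
   2 area(zpq) <= (2R)^2 times the length of the projection of pq.  These projections
   tile the projection of the segment ab, of length |ab|^2 / (2 area(zab)) <= 2|ab|/r.
   Hence the arc has length at most (4R/r)^2 |ab| <= 64 (c + 1)^2 |ab|. *)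

Lemma ex_pos_lbound (R : realDomainType) (N : nat) (F : nat -> R) :
  (forall k, (k < N)%N -> 0 < F k) -> exists2 e, 0 < e & forall k, (k < N)%N -> e <= F k.
Proof.
elim: N => [|N IH] FP; first by exists 1.
have [e e0 eF] := IH (fun k kN => FP k (ltnW kN)).
exists (Num.min e (F N)) => [|k]; first by rewrite lt_min e0 FP.
rewrite ltnS leq_eqVlt => /orP [/eqP ->|kN]; first by rewrite ge_min lexx orbT.
by rewrite ge_min eF.
Qed.

Section Geometry.
Variable R : realType.
Implicit Types (a b p q x y z o : pt R) (r s t rho : R).

Lemma ler_sqr_ge0 (x y : R) : 0 <= y -> x ^+ 2 <= y ^+ 2 -> x <= y.
Proof.
move=> y0 h; apply: le_trans (ler_norm x) _.
by rewrite -sqrtr_sqr -[y]ger0_norm // -sqrtr_sqr ler_wsqrtr.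
Qed.

Lemma dist_ge0 a b : 0 <= dist a b.
Proof. exact: sqrtr_ge0. Qed.

Lemma sqr_dist a b : dist a b ^+ 2 = (a.1 - b.1) ^+ 2 + (a.2 - b.2) ^+ 2.
Proof. by rewrite sqr_sqrtr // addr_ge0 // sqr_ge0. Qed.

Lemma distC a b : dist a b = dist b a.
Proof. by rewrite /dist; congr Num.sqrt; ring. Qed.

Lemma distxx a : dist a a = 0.
Proof. by rewrite /dist !subrr expr0n /= addr0 sqrtr0. Qed.

Lemma dist_gt0 {a b} : a != b -> 0 < dist a b.
Proof.
case: a b => [a1 a2] [b1 b2] hab; rewrite lt_neqAle dist_ge0 andbT eq_sym.
apply: contra hab => /eqP/(congr1 (fun d => d ^+ 2)).
rewrite sqr_dist expr0n /= => /eqP; rewrite paddr_eq0 ?sqr_ge0 // !sqrf_eq0 !subr_eq0.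
by case/andP => /eqP -> /eqP ->.
Qed.

Lemma dist_scale p q p' q' t :
  p.1 - q.1 = t * (p'.1 - q'.1) -> p.2 - q.2 = t * (p'.2 - q'.2) ->
  dist p q = `|t| * dist p' q'.
Proof.
rewrite /dist => -> ->.
have -> : (t * (p'.1 - q'.1)) ^+ 2 + (t * (p'.2 - q'.2)) ^+ 2 =
  t ^+ 2 * ((p'.1 - q'.1) ^+ 2 + (p'.2 - q'.2) ^+ 2) by ring.
by rewrite sqrtrM ?sqr_ge0 // sqrtr_sqr.
Qed.

Lemma le_dist_mul p q p' q' (u v : R) :
  u ^+ 2 + v ^+ 2 = dist p q ^+ 2 * dist p' q' ^+ 2 -> u <= dist p q * dist p' q'.
Proof.
move=> h; apply: ler_sqr_ge0; first by rewrite mulr_ge0 ?dist_ge0.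
by rewrite exprMn -h lerDl sqr_ge0.
Qed.

Lemma cross_le_dist p q p' q' :
  (q.1 - p.1) * (q'.2 - p'.2) - (q.2 - p.2) * (q'.1 - p'.1) <= dist p q * dist p' q'.
Proof.
apply: (le_dist_mul _ _ _ _ _ ((q.1 - p.1) * (q'.1 - p'.1) + (q.2 - p.2) * (q'.2 - p'.2))).
by rewrite !sqr_dist; ring.
Qed.

Lemma dot_le_dist p q p' q' :
  (q.1 - p.1) * (q'.1 - p'.1) + (q.2 - p.2) * (q'.2 - p'.2) <= dist p q * dist p' q'.
Proof.
apply: (le_dist_mul _ _ _ _ _ ((q.1 - p.1) * (q'.2 - p'.2) - (q.2 - p.2) * (q'.1 - p'.1))).
by rewrite !sqr_dist; ring.
Qed.

Lemma dist_triangle a b c : dist a c <= dist a b + dist b c.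
Proof.
apply: ler_sqr_ge0; first by rewrite addr_ge0 ?dist_ge0.
have := dot_le_dist a b b c; rewrite sqrrD !sqr_dist; lra.
Qed.

Lemma orient_rot a b c : orient a b c = orient b c a.
Proof. by rewrite /orient; ring. Qed.

Lemma orient_swap a b c : orient a b c = - orient a c b.
Proof. by rewrite /orient; ring. Qed.

Lemma orient_aab a b : orient a a b = 0.
Proof. by rewrite /orient; ring. Qed.

Lemma orient_abb a b : orient a b b = 0.
Proof. by rewrite /orient; ring. Qed.

Lemma orient_aba a b : orient a b a = 0.
Proof. by rewrite /orient; ring. Qed.

Lemma orient_plucker p0 p1 p2 p3 p4 :
  orient p0 p1 p3 * orient p0 p2 p4 =
  orient p0 p1 p2 * orient p0 p3 p4 + orient p0 p1 p4 * orient p0 p2 p3.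
Proof. by rewrite /orient; ring. Qed.

Lemma orient_lipschitz p q x y : orient p q x - orient p q y <= dist p q * dist y x.
Proof.
have -> : orient p q x - orient p q y =
  (q.1 - p.1) * (x.2 - y.2) - (q.2 - p.2) * (x.1 - y.1) by rewrite /orient; ring.
exact: cross_le_dist.
Qed.

Definition seg_pt p q t : pt R := (p.1 + t * (q.1 - p.1), p.2 + t * (q.2 - p.2)).

Lemma dist_seg_ptl p q t : dist (seg_pt p q t) q = `|1 - t| * dist p q.
Proof. by apply: dist_scale => /=; ring. Qed.

Lemma dist_seg_ptr p q t : dist p (seg_pt p q t) = `|t| * dist p q.
Proof. by apply: dist_scale => /=; ring. Qed.

Lemma orient_seg_pt3 p q a b t :
  orient p q (seg_pt a b t) = (1 - t) * orient p q a + t * orient p q b.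
Proof. by rewrite /orient /=; ring. Qed.

Lemma orient_seg_pt12 a0 a1 b0 b1 w s t :
  orient (seg_pt a0 a1 s) (seg_pt b0 b1 t) w =
  (1 - s) * (1 - t) * orient a0 b0 w + (1 - s) * t * orient a0 b1 w +
  s * (1 - t) * orient a1 b0 w + s * t * orient a1 b1 w.
Proof. by rewrite /orient /=; ring. Qed.

Definition midpoint a b : pt R := ((a.1 + b.1) / 2, (a.2 + b.2) / 2).

Lemma midpoint_eq a b : midpoint a b = a \/ midpoint a b = b -> a = b.
Proof.
case: a b => a1 a2 [b1 b2] [] [e1 e2]; congr (_, _); lra.
Qed.

Lemma line_midpoint p u a b : line p u a -> line p u b -> line p u (midpoint a b).
Proof.
by move=> [t ->] [t' ->]; exists ((t + t') / 2); congr (_, _) => /=; field.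
Qed.

Lemma on_seg_midpoint p q a b : on_seg p q a -> on_seg p q b -> on_seg p q (midpoint a b).
Proof.
move=> [t [/andP [t0 t1] ->]] [t' [/andP [t'0 t'1] ->]].
exists ((t + t') / 2); split; first by apply/andP; split; lra.
by congr (_, _) => /=; field.
Qed.

(* [z] lies to the left of the directed line [pq], at distance at least [rho] from it
   (when [p != q]). *)
Definition left_by rho p q z : Prop := rho * dist p q <= orient p q z.

Lemma left_by_seg_ptl rho p q z t : 0 <= t <= 1 ->
  left_by rho p q z -> left_by rho (seg_pt p q t) q z.
Proof.
case/andP=> t0 t1 h; rewrite /left_by dist_seg_ptl ger0_norm ?subr_ge0 //.
have -> : orient (seg_pt p q t) q z = (1 - t) * orient p q z by rewrite /orient /=; ring.
by rewrite mulrCA ler_wpM2l ?subr_ge0.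
Qed.

Lemma left_by_seg_ptr rho p q z t : 0 <= t <= 1 ->
  left_by rho p q z -> left_by rho p (seg_pt p q t) z.
Proof.
case/andP=> t0 t1 h; rewrite /left_by dist_seg_ptr ger0_norm //.
have -> : orient p (seg_pt p q t) z = t * orient p q z by rewrite /orient /=; ring.
by rewrite mulrCA ler_wpM2l.
Qed.

Definition offset p q o t : pt R :=
  (o.1 - t / dist p q * (q.2 - p.2), o.2 + t / dist p q * (q.1 - p.1)).

Lemma dist_offset p q o t : p != q -> dist (offset p q o t) o = `|t|.
Proof.
move=> /dist_gt0 /lt0r_neq0 pq0.
rewrite (dist_scale _ _ (p.2, q.1) (q.2, p.1) (t / dist p q)) /=; last 2 first.
- by ring.
- by ring.
have -> : dist (p.2, q.1) (q.2, p.1) = dist p q by rewrite /dist /=; congr Num.sqrt; ring.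
by rewrite normrM normfV (ger0_norm (dist_ge0 p q)) mulfVK.
Qed.

Lemma orient_offset p q o t : p != q ->
  orient p q (offset p q o t) = orient p q o + t * dist p q.
Proof.
move=> /dist_gt0 /lt0r_neq0 pq0.
transitivity (orient p q o + t / dist p q * dist p q ^+ 2); last by field.
by rewrite sqr_dist /orient /=; ring.
Qed.

Lemma halfplane_left_by rho p q z : 0 <= rho ->
  (forall x, dist x z <= rho -> 0 <= orient p q x) -> left_by rho p q z.
Proof.
move=> rho0 hz; rewrite /left_by.
have [<-|pq] := eqVneq p q; first by rewrite distxx mulr0 orient_aab.
have := hz (offset p q z (- rho)); rewrite dist_offset // normrN ger0_norm //.
by rewrite orient_offset // mulNr subr_ge0; apply.
Qed.

Lemma exists_left_by o {s a b} : 0 <= s -> a != b ->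
  exists2 z, dist z o = s & left_by s a b z \/ left_by s b a z.
Proof.
move=> s0 ab; rewrite /left_by [dist b a]distC.
have [h|h] := leP 0 (orient a b o).
  exists (offset a b o s); first by rewrite dist_offset // ger0_norm.
  by left; rewrite orient_offset // lerDr.
exists (offset a b o (- s)); first by rewrite dist_offset // normrN ger0_norm.
by right; rewrite orient_swap -orient_rot orient_offset //; lra.
Qed.

(* [orient a b z - orient a b w] is [|ab|] times the distance from [w] to the
   parallel to [ab] through [z]; scaling [w - z] so that this quantity becomes
   [1] and reading off the coordinate along [ab] gives the position of the
   central projection from [z] of [w] onto a fixed parallel to [ab]. *)
Definition central_proj a b z w : R :=
  ((b.1 - a.1) * (w.1 - z.1) + (b.2 - a.2) * (w.2 - z.2)) / (orient a b z - orient a b w).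

Lemma central_projB a b z p q :
  orient a b z - orient a b p != 0 -> orient a b z - orient a b q != 0 ->
  dist a b ^+ 2 * orient p q z = (orient a b z - orient a b p) *
    (orient a b z - orient a b q) * (central_proj a b z q - central_proj a b z p).
Proof.
rewrite /central_proj sqr_dist /orient => hp hq.
by field; rewrite hp hq.
Qed.

Lemma left_by_central_proj rho D a b z p q : a != b -> 0 <= rho ->
  left_by rho p q z -> 0 < orient a b z - orient a b p -> 0 < orient a b z - orient a b q ->
  dist p z <= D -> dist q z <= D ->
  rho * dist p q <= D ^+ 2 * (central_proj a b z q - central_proj a b z p).
Proof.
rewrite /left_by => ab rho0 hpq hp hq pD qD; set O := orient p q z in hpq *.
have O0 : 0 <= O by apply: le_trans hpq; rewrite mulr_ge0 ?dist_ge0.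
have hY w : dist w z <= D -> orient a b z - orient a b w <= dist a b * D.
  move=> wD; apply: le_trans (orient_lipschitz _ _ _ _) _.
  by rewrite ler_wpM2l ?dist_ge0.
have hYY := ler_pM (ltW hp) (ltW hq) (hY p pD) (hY q qD).
have eqO := central_projB a b z p q (lt0r_neq0 hp) (lt0r_neq0 hq); rewrite -/O in eqO.
have gap0 : 0 <= central_proj a b z q - central_proj a b z p.
  by rewrite -(pmulr_rge0 _ (mulr_gt0 hp hq)) -eqO mulr_ge0 ?sqr_ge0.
apply: le_trans hpq _.
rewrite -(ler_pM2l (exprn_gt0 2 (dist_gt0 ab))) eqO mulrA -exprMn.
by rewrite ler_wpM2r // (le_trans hYY) // -expr2 mulrC.
Qed.

Lemma disc_sub o r z s : dist z o + s <= r -> disc z s `<=` disc o r.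
Proof.
by move=> h x; rewrite /disc /= => xz; apply: le_trans (dist_triangle x z o) _; lra.
Qed.

Lemma disc_dist_le {o r x y} : disc o r x -> disc o r y -> dist x y <= 2 * r.
Proof.
rewrite /disc /= => xo yo; apply: le_trans (dist_triangle x o y) _.
by rewrite distC in yo; lra.
Qed.

Lemma disc_radius_le o r o' r' : 0 <= r -> disc o r `<=` disc o' r' -> r <= r'.
Proof.
move=> r0 sub; pose x := seg_pt o (o.1 + 1, o.2) r; pose y := seg_pt o (o.1 + 1, o.2) (- r).
have unit : dist o (o.1 + 1, o.2) = 1.
  by rewrite /dist /= -[RHS]sqrtr1; congr Num.sqrt; ring.
have xo : dist x o = r by rewrite distC dist_seg_ptr unit mulr1 ger0_norm.
have yo : dist y o = r by rewrite distC dist_seg_ptr unit mulr1 normrN ger0_norm.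
have xy : dist x y = 2 * r.
  rewrite (@dist_scale _ _ o (o.1 + 1, o.2) (- (2 * r))) /=; last 2 first.
  - by ring.
  - by ring.
  by rewrite unit mulr1 normrN ger0_norm ?mulr_ge0.
have xr : disc o r x by rewrite /disc /= xo.
have yr : disc o r y by rewrite /disc /= yo.
by have := disc_dist_le (sub x xr) (sub y yr); rewrite xy; lra.
Qed.

Section Polygon.
Variable V : seq (pt R).
Hypothesis convV : convex_polygon V.
Local Notation n := (size V).
Local Notation v := (vtx V).

Lemma size_ge3 : (3 <= n)%N.
Proof. by case: convV. Qed.

Lemma size_gt0 : (0 < n)%N.
Proof. exact: leq_trans size_ge3. Qed.

Lemma vtx_mod k : v (k %% n) = v k.
Proof. by rewrite /vtx modn_mod. Qed.

Lemma vtx_modS k : v (k %% n).+1 = v k.+1.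
Proof. by rewrite /vtx -addn1 modnDml addn1. Qed.

Lemma vtxDn k : v (k + n) = v k.
Proof. by rewrite /vtx modnDr. Qed.

Lemma orient_edge_gt0 k m : (m %% n != k %% n)%N -> (m %% n != k.+1 %% n)%N ->
  0 < orient (v k) (v k.+1) (v m).
Proof.
move=> mk mk1; rewrite -vtx_mod -vtx_modS -(vtx_mod m).
by apply: convV.2; rewrite ?ltn_pmod ?size_gt0 // -addn1 modnDml addn1.
Qed.

Lemma orient_edgeD_gt0 (c x y : nat) :
  (x < n)%N -> (y < n)%N -> x != y -> (x != y.+1 %% n)%N ->
  0 < orient (v (c + y)) (v (c + y).+1) (v (c + x)).
Proof.
move=> xn yn xy xy1; apply: orient_edge_gt0; rewrite -?addnS eqn_modDl (modn_small xn) //.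
by rewrite (modn_small yn).
Qed.

Lemma orient_vtx_gt0 (c l m : nat) : (0 < l)%N -> (l < m)%N -> (m < n)%N ->
  0 < orient (v c) (v (c + l)) (v (c + m)).
Proof.
have n3 := size_ge3.
have next (y : nat) : (0 < y)%N -> (y.+1 < n)%N -> 0 < orient (v c) (v (c + y)) (v (c + y.+1)).
  move=> y0 yn; rewrite orient_rot addnS -{3}[c]addn0.
  by apply: orient_edgeD_gt0; rewrite ?modn_small //; lia.
have first (y : nat) : (1 < y)%N -> (y < n)%N -> 0 < orient (v c) (v c.+1) (v (c + y)).
  move=> y1 yn; rewrite -{1 2}[c]addn0.
  by apply: orient_edgeD_gt0; rewrite ?modn_small //; lia.
move=> l0; elim: m => // m IH; rewrite ltnS leq_eqVlt => /orP [/eqP <-|lm] mn.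
  exact: next.
have pos_l : 0 <= orient (v c) (v c.+1) (v (c + l)).
  have [->|l1] := eqVneq l 1%N; first by rewrite addn1 orient_abb.
  by apply/ltW/first; lia.
have f_m : 0 < orient (v c) (v c.+1) (v (c + m)) by apply: first; lia.
have f_m1 : 0 < orient (v c) (v c.+1) (v (c + m.+1)) by apply: first; lia.
have n_m : 0 < orient (v c) (v (c + m)) (v (c + m.+1)) by apply: next; lia.
have IHm : 0 < orient (v c) (v (c + l)) (v (c + m)) by apply: IH; lia.
rewrite -(pmulr_rgt0 _ f_m) orient_plucker.
by have := mulr_ge0 pos_l (ltW n_m); have := mulr_gt0 f_m1 IHm; lra.
Qed.

Lemma orient_vtx_ge0 (c l m p : nat) : (l <= m)%N -> (m <= p)%N -> (p <= n)%N ->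
  0 <= orient (v (c + l)) (v (c + m)) (v (c + p)).
Proof.
move=> lm mp pn.
have [->|lm'] := eqVneq l m; first by rewrite orient_aab.
have [->|mp'] := eqVneq m p; first by rewrite orient_abb.
have [/andP [/eqP -> /eqP ->]|lp] := boolP ((l == 0) && (p == n))%N.
  by rewrite addn0 vtxDn orient_aba.
have -> : (c + m = c + l + (m - l))%N by lia.
have -> : (c + p = c + l + (p - l))%N by lia.
by apply/ltW/orient_vtx_gt0; lia.
Qed.

Definition arc_len i j := ((j + n - i) %% n)%N.

Lemma arc_lenP {i j} : (i < n)%N -> (j < n)%N -> i != j ->
  [/\ (0 < arc_len i j)%N, (arc_len i j < n)%N & (i + arc_len i j) %% n = j]%N.
Proof.
move=> hi hj ij; rewrite /arc_len.
have [ilj|jli] := ltnP i j.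
  have -> : (j + n - i = (j - i) + n)%N by lia.
  have jin : (j - i < n)%N by lia.
  by rewrite modnDr (modn_small jin) (subnKC (ltnW ilj)) (modn_small hj); split => //; lia.
have ji : (j < i)%N by rewrite ltn_neqAle eq_sym ij.
have jin : (j + n - i < n)%N by lia.
rewrite (modn_small jin) (_ : i + (j + n - i) = j + n)%N; last by lia.
by rewrite modnDr (modn_small hj); split => //; lia.
Qed.

Lemma orient_arc_vtx_le0 {i j a b k} : (i < n)%N -> (j < n)%N -> i != j ->
  on_edge V i a -> on_edge V j b -> (1 <= k <= arc_len i j)%N ->
  orient a b (v (i + k)) <= 0.
Proof.
move=> hi hj ij [s [/andP [s0 s1] ->]] [t [/andP [t0 t1] ->]] hk.
have [m0 mn im] := arc_lenP hi hj ij; set m := arc_len i j in m0 mn im hk.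
have vi : v i = v (i + 0) by rewrite addn0.
have vi1 : v i.+1 = v (i + 1) by rewrite addn1.
have vj : v j = v (i + m) by rewrite -im vtx_mod.
have vj1 : v j.+1 = v (i + m.+1) by rewrite -im vtx_modS addnS.
have := orient_seg_pt12 (v i) (v i.+1) (v j) (v j.+1) (v (i + k)) s t.
rewrite /seg_pt => ->; rewrite vi vi1 vj vj1; clear im.
have O (l p : nat) : (l <= 1)%N -> (m <= p)%N -> (p <= m.+1)%N ->
    orient (v (i + l)) (v (i + p)) (v (i + k)) <= 0.
  by move=> l1 mp pm; rewrite orient_swap oppr_le0; apply: orient_vtx_ge0; lia.
have s1' : 0 <= 1 - s by rewrite subr_ge0.
have t1' : 0 <= 1 - t by rewrite subr_ge0.
have := mulr_ge0_le0 (mulr_ge0 s1' t1') (O 0 m isT (leqnn m) (leqnSn m)).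
have := mulr_ge0_le0 (mulr_ge0 s1' t0) (O 0 m.+1 isT (leqnSn m) (leqnn _)).
have := mulr_ge0_le0 (mulr_ge0 s0 t1') (O 1 m isT (leqnn m) (leqnSn m)).
have := mulr_ge0_le0 (mulr_ge0 s0 t0) (O 1 m.+1 isT (leqnSn m) (leqnn _)).
lra.
Qed.

Lemma region_orient_ge0 {x} k : polygon_region V x -> 0 <= orient (v k) (v k.+1) x.
Proof. by move=> hx; rewrite -vtx_mod -vtx_modS; apply: hx; rewrite ltn_pmod ?size_gt0. Qed.

Lemma vtx_in_region k : polygon_region V (v k).
Proof.
move=> k' k'n; have [e|ne] := eqVneq (k %% n)%N k'.
  by rewrite -(vtx_mod k) e orient_aba.
have [e|ne'] := eqVneq (k %% n)%N (k'.+1 %% n)%N.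
  by rewrite -(vtx_mod k) e vtx_mod orient_abb.
by apply/ltW/orient_edge_gt0; rewrite ?(modn_small k'n).
Qed.

Lemma edge_in_region {k a} : on_edge V k a -> polygon_region V a.
Proof.
case=> t [/andP [t0 t1] ->] k' k'n; rewrite -[(_, _)]/(seg_pt (v k) (v k.+1) t).
have o0 := vtx_in_region k k' k'n; have o1 := vtx_in_region k.+1 k' k'n.
by rewrite orient_seg_pt3; apply: addr_ge0; apply: mulr_ge0 => //; rewrite subr_ge0.
Qed.

Lemma edge_left_by {z rho} k : 0 <= rho -> disc z rho `<=` polygon_region V ->
  left_by rho (v k) (v k.+1) z.
Proof.
by move=> rho0 zP; apply: halfplane_left_by => // x /zP /region_orient_ge0; apply.
Qed.

Lemma on_edge_left_byl {rho z k a} : on_edge V k a ->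
  left_by rho (v k) (v k.+1) z -> left_by rho a (v k.+1) z.
Proof. by case=> t [ht ->]; apply: left_by_seg_ptl. Qed.

Lemma on_edge_left_byr {rho z k b} : on_edge V k b ->
  left_by rho (v k) (v k.+1) z -> left_by rho (v k) b z.
Proof. by case=> t [ht ->]; apply: left_by_seg_ptr. Qed.

Lemma perim_arc_le_central_proj {z rho D i j a b} : 0 <= rho ->
  disc z rho `<=` polygon_region V -> polygon_region V `<=` disc z D ->
  (i < n)%N -> (j < n)%N -> i != j -> on_edge V i a -> on_edge V j b -> a != b ->
  0 < orient a b z ->
  rho * perim_arc V i a j b <= D ^+ 2 * (central_proj a b z b - central_proj a b z a).
Proof.
move=> rho0 zP PD hi hj ij ha hb ab H0.
have [m0 _ im] := arc_lenP hi hj ij.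
rewrite /perim_arc -/(arc_len i j); set m := arc_len i j in m0 im *.
set cp := central_proj a b z.
have Ya : 0 < orient a b z - orient a b a by rewrite orient_aba subr0.
have Yb : 0 < orient a b z - orient a b b by rewrite orient_abb subr0.
have Yv k : (1 <= k <= m)%N -> 0 < orient a b z - orient a b (v (i + k)).
  by move=> hk; rewrite subr_gt0 (le_lt_trans (orient_arc_vtx_le0 hi hj ij ha hb hk)).
have key p q : left_by rho p q z -> 0 < orient a b z - orient a b p ->
    0 < orient a b z - orient a b q -> polygon_region V p -> polygon_region V q ->
    rho * dist p q <= D ^+ 2 * (cp q - cp p).
  by move=> pq hp hq /PD pD /PD qD; apply: left_by_central_proj.
have first : rho * dist a (v i.+1) <= D ^+ 2 * (cp (v (i + 1)) - cp a).
  rewrite addn1; apply: key (edge_in_region ha) (vtx_in_region _) => //.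
    exact: on_edge_left_byl ha (edge_left_by _ rho0 zP).
  by rewrite -addn1; apply: Yv; rewrite leqnn m0.
have last : rho * dist (v j) b <= D ^+ 2 * (cp b - cp (v (i + m))).
  have vj : v (i + m) = v j by rewrite -im vtx_mod.
  rewrite vj; apply: key (vtx_in_region _) (edge_in_region hb) => //.
    exact: on_edge_left_byr hb (edge_left_by _ rho0 zP).
  by rewrite -vj; apply: Yv; rewrite m0 leqnn.
have middle : rho * \sum_(1 <= k < m) dist (v (i + k)) (v (i + k).+1) <=
    D ^+ 2 * (cp (v (i + m)) - cp (v (i + 1))).
  rewrite -(telescope_sumr (fun k => cp (v (i + k)))) // mulr_sumr mulr_sumr.
  apply: ler_sum_nat => k /andP [k1 km]; rewrite /= addnS.
  apply: key (vtx_in_region _) (vtx_in_region _); first exact: edge_left_by _ rho0 zP.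
    by apply: Yv; rewrite k1 ltnW.
  by rewrite -addnS; apply: Yv; rewrite km.
have -> : cp b - cp a = (cp (v (i + 1)) - cp a) + (cp (v (i + m)) - cp (v (i + 1))) +
  (cp b - cp (v (i + m))) by ring.
rewrite 2![rho * _]mulrDr [X in _ <= X]mulrDr [X in _ <= X + _]mulrDr.
by apply: lerD; first apply: lerD.
Qed.

Lemma perim_arc_le {z rho D i j a b} : 0 < rho ->
  disc z rho `<=` polygon_region V -> polygon_region V `<=` disc z D ->
  (i < n)%N -> (j < n)%N -> i != j -> on_edge V i a -> on_edge V j b -> a != b ->
  left_by rho a b z -> rho ^+ 2 * perim_arc V i a j b <= D ^+ 2 * dist a b.
Proof.
move=> rho0 zP PD hi hj ij ha hb ab hab.
have H0 : 0 < orient a b z := lt_le_trans (mulr_gt0 rho0 (dist_gt0 ab)) hab.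
have := perim_arc_le_central_proj (ltW rho0) zP PD hi hj ij ha hb ab H0.
have -> : central_proj a b z b - central_proj a b z a = dist a b ^+ 2 / orient a b z.
  rewrite /central_proj orient_abb orient_aba !subr0 sqr_dist -mulrBl.
  by congr (_ / _); ring.
move=> h; rewrite expr2 -mulrA; apply: le_trans (ler_wpM2l (ltW rho0) h) _.
rewrite mulrCA ler_wpM2l ?sqr_ge0 // mulrA ler_pdivrMr // expr2 mulrA.
by rewrite [_ * orient a b z]mulrC ler_wpM2r ?dist_ge0.
Qed.

Lemma sum_orient_edges_const x y :
  \sum_(0 <= k < n) orient (v k) (v k.+1) x = \sum_(0 <= k < n) orient (v k) (v k.+1) y.
Proof.
apply/eqP; rewrite -subr_eq0 -sumrB.
have e k : orient (v k) (v k.+1) x - orient (v k) (v k.+1) y =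
    (x.2 - y.2) * ((v k.+1).1 - (v k).1) - (x.1 - y.1) * ((v k.+1).2 - (v k).2).
  by rewrite /orient; ring.
under eq_bigr do rewrite e.
rewrite sumrB -!mulr_sumr !telescope_sumr // -[v n]/(v (0 + n)) vtxDn.
by rewrite !subrr !mulr0 subrr.
Qed.

Lemma region_orient_le x k : polygon_region V x -> (k < n)%N ->
  orient (v k) (v k.+1) x <= \sum_(0 <= l < n) orient (v l) (v l.+1) (v 0).
Proof.
move=> hx kn; rewrite -(sum_orient_edges_const x) (bigD1_seq k) ?mem_index_iota ?iota_uniq //=.
by rewrite lerDl sumr_ge0 // => l _; apply: region_orient_ge0.
Qed.

Lemma region_bounded : exists o r, polygon_region V `<=` disc o r.
Proof.
have n3 := size_ge3.
pose C := \sum_(0 <= l < n) orient (v l) (v l.+1) (v 0).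
pose D := orient (v 0) (v 1) (v 2).
have D0 : 0 < D by apply: orient_edge_gt0; rewrite !modn_small //; lia.
exists (v 1), (C / D * (dist (v 1) (v 2) + dist (v 0) (v 1))) => x hx.
have coef k : (k < n)%N -> 0 <= orient (v k) (v k.+1) x / D <= C / D.
  move=> kn; apply/andP; split; first by rewrite divr_ge0 ?(region_orient_ge0 _ hx) ?ltW.
  by rewrite ler_pM2r ?invr_gt0 // region_orient_le.
have /andP [al0 alC] := coef 0%N size_gt0; have /andP [be0 beC] := coef 1%N (ltnW n3).
set al := orient (v 0) (v 1) x / D in al0 alC; set be := orient (v 1) (v 2) x / D in be0 beC.
(* Solving for [x] in the frame at [v 1]: [x - v 1 = al (v 2 - v 1) - be (v 1 - v 0)]. *)
pose y := seg_pt (v 1) (v 2) al.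
have xy : dist x y = be * dist (v 0) (v 1).
  rewrite -(ger0_norm be0); apply: dist_scale; rewrite /y /al /be /D /orient /=;
    field; exact: lt0r_neq0 D0.
rewrite /disc /=; apply: le_trans (dist_triangle x y (v 1)) _.
rewrite xy [dist y _]distC dist_seg_ptr ger0_norm // mulrDr addrC.
by rewrite lerD // ler_wpM2r ?dist_ge0.
Qed.

Lemma region_interior : exists g, exists2 eps, 0 < eps & disc g eps `<=` polygon_region V.
Proof.
have n3 := size_ge3.
pose g : pt R := (((v 0).1 + (v 1).1 + (v 2).1) / 3, ((v 0).2 + (v 1).2 + (v 2).2) / 3).
have g_in k : (k < n)%N -> 0 < orient (v k) (v k.+1) g.
  move=> kn; have [m m3 km] : exists2 m, (m < 3)%N & 0 < orient (v k) (v k.+1) (v m).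
    have [->|k0] := eqVneq k 0%N.
      by exists 2%N => //; apply: orient_edge_gt0; rewrite !modn_small //; lia.
    have [kn1|kn1] := eqVneq k.+1 n.
      by exists 1%N => //; apply: orient_edge_gt0; rewrite ?kn1 ?modnn !modn_small //; lia.
    by exists 0%N => //; apply: orient_edge_gt0; rewrite !modn_small //; lia.
  have -> : orient (v k) (v k.+1) g = (orient (v k) (v k.+1) (v 0) +
      orient (v k) (v k.+1) (v 1) + orient (v k) (v k.+1) (v 2)) / 3.
    by rewrite /orient /=; field.
  have o0 := vtx_in_region 0 k kn; have o1 := vtx_in_region 1 k kn.
  have o2 := vtx_in_region 2 k kn.
  rewrite divr_gt0 //; move: m3 km; case: m => [|[|[|]]] //= _; lra.
pose F k := orient (v k) (v k.+1) g / (1 + dist (v k) (v k.+1)).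
have [eps eps0 epsF] : exists2 eps, 0 < eps & forall k, (k < n)%N -> eps <= F k.
  by apply: ex_pos_lbound => k kn; rewrite divr_gt0 ?g_in ?ltr_wpDr ?dist_ge0.
exists g, eps => // x xg k kn.
have := epsF k kn; rewrite ler_pdivlMr ?ltr_wpDr ?dist_ge0 // => epsk.
have := orient_lipschitz (v k) (v k.+1) g x.
have := ler_wpM2l (dist_ge0 (v k) (v k.+1)) xg.
lra.
Qed.

Lemma fat_discs {c} : 0 < c -> fat c V ->
  exists o o' r r', [/\ 0 < r, disc o r `<=` polygon_region V,
    polygon_region V `<=` disc o' r' & r' <= 2 * (c + 1) * r].
Proof.
move=> c0; rewrite /fat /outer_radius /inner_radius.
set Sin := [set r | 0 <= r /\ exists o, disc o r `<=` polygon_region V].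
set Sout := [set r | exists o, polygon_region V `<=` disc o r] => fatV.
have [g [eps eps0 gP]] := region_interior.
have [o' [r0 Po']] := region_bounded.
have Sin_eps : Sin eps by split; [exact: ltW eps0 | exists g].
have sup_Sin : has_sup Sin.
  split; first by exists eps.
  by exists r0 => r [r_ge0 [o oP]]; apply: disc_radius_le r_ge0 (subset_trans oP Po').
have sup_gt0 : 0 < sup Sin by apply: lt_le_trans eps0 (sup_upper_bound sup_Sin Sin_eps).
have inf_Sout : has_inf Sout.
  split; first by exists r0, o'.
  by exists 0 => r [o /(_ _ (vtx_in_region 0))]; apply: le_trans (dist_ge0 _ _).
(* Near-optimal discs: [r > sup / 2] and [r' < inf + sup <= (c + 1) sup]. *)
have [r [_ [o oP]] r_big] := sup_adherent (divr_gt0 sup_gt0 (ltr0n _ 2)) sup_Sin.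
have [r' [o'' Po''] r'_small] := inf_adherent sup_gt0 inf_Sout.
have inf_le : inf Sout <= c * sup Sin by rewrite -ler_pdivrMr.
exists o, o'', r, r'; split => //; first lra.
have : (c + 1) * sup Sin <= (c + 1) * (2 * r) by rewrite ler_wpM2l; lra.
lra.
Qed.

Lemma min_perim_arc_le c i j a b : 0 < c -> fat c V ->
  (i < n)%N -> (j < n)%N -> i != j -> on_edge V i a -> on_edge V j b -> a != b ->
  Num.min (perim_arc V i a j b) (perim_arc V j b i a) <= 64 * (c + 1) ^+ 2 * dist a b.
Proof.
move=> c0 fatV hi hj ij ha hb ab.
have [o [o' [r [r' [r0 oP Po' rr']]]]] := fat_discs c0 fatV.
have r2 : 0 < r / 2 by rewrite divr_gt0.
have [z zo zab] := exists_left_by o (ltW r2) ab.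
have zP : disc z (r / 2) `<=` polygon_region V.
  by apply: subset_trans oP; apply: disc_sub; rewrite zo; lra.
have Pz : polygon_region V `<=` disc z (2 * r').
  move=> x xP; have zo' : disc o' r' z by apply/Po'/zP; rewrite /disc /= distxx ltW.
  exact: disc_dist_le (Po' x xP) zo'.
have r'0 : 0 <= r' by apply: le_trans (dist_ge0 _ _) (Po' _ (vtx_in_region 0)).
have scale A : (r / 2) ^+ 2 * A <= (2 * r') ^+ 2 * dist a b ->
    A <= 64 * (c + 1) ^+ 2 * dist a b.
  move=> h; rewrite -(ler_pM2l (exprn_gt0 2 r2)); apply: le_trans h _.
  rewrite mulrA ler_wpM2r ?dist_ge0 //.
  have -> : (r / 2) ^+ 2 * (64 * (c + 1) ^+ 2) = (4 * (c + 1) * r) ^+ 2 by field.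
  have cr := mulr_ge0 (ltW c0) (ltW r0).
  by rewrite ler_pXn2r ?nnegrE //; lra.
rewrite ge_min; case: zab => [zab | zba]; apply/orP; [left | right]; apply: scale.
  exact: perim_arc_le r2 zP Pz hi hj ij ha hb ab zab.
rewrite distC; apply: perim_arc_le r2 zP Pz hj hi _ hb ha _ zba; by rewrite eq_sym.
Qed.

End Polygon.

End Geometry.

Local Close Scope classical_set_scope.

Theorem lemma2p2 (R : realType) (c : R) (hc : 1 < c) :
  exists d : R,
    forall (V : seq (pt R)) (p u a b : pt R) (i j : nat),
      convex_polygon V -> fat c V ->
      u != (0, 0) -> a != b ->
      line p u a -> line p u b ->
      polygon_boundary V a -> polygon_boundary V b ->
      (forall x, line p u x -> polygon_boundary V x -> x = a \/ x = b) ->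
      (i < size V)%N -> (j < size V)%N ->
      on_edge V i a -> on_edge V j b ->
      Num.min (perim_arc V i a j b) (perim_arc V j b i a) <= d * dist a b.
Proof.
exists (64 * (c + 1) ^+ 2) => V p u a b i j convV fatV _ ab pa pb _ _ cut hi hj ha hb.
apply: min_perim_arc_le => //; first exact: lt_trans hc.
apply: contra_neq ab => ij; subst j; apply: midpoint_eq; apply: cut.
  exact: line_midpoint.
by exists i => //; apply: on_seg_midpoint.
Qed.
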